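(* Let $n>1$, $c>0$ and $\rho>0$. Let $(\mathfrak{l},g_\rho^c)$ be the metric Lie algebra described in the context. Then $(\mathfrak{l},g_\rho^c)$ is not a solvsoliton: there are no $\lambda\in\mathbb{R}$ and derivation $D$ of $\mathfrak{l}$ such that the Ricci endomorphism of the left-invariant metric defined by $g_\rho^c$ on the simply connected Lie group with Lie algebra $\mathfrak{l}$ equals $\lambda\,\mathrm{Id}+D$.
   Context: Fix $n\ge 2$, $\rho>0$, $c\ge 0$. The real Lie algebra $\mathfrak{l}$ has basis $B_a^R,B_a^I$ ($a=1,\dots,n-1$), $e_k,f_k$ ($k=0,\dots,n-1$), $Z$. Its brackets are as follows (all brackets of basis elements not listed, up to antisymmetry, are zero). On $\mathfrak{b}=\mathrm{span}\{B_a^R,B_a^I\}$: $[B_1^R,B_1^I]=2B_1^I$, and for $a\in\{2,\dots,n-1\}$: $[B_1^R,B_a^R]=B_a^R$, $[B_1^R,B_a^I]=B_a^I$, $[B_a^R,B_a^I]=\tfrac12 B_1^I$. On $\mathfrak{heis}_{2n+1}=\mathrm{span}\{e_k,f_k,Z\}$: $[e_0,f_0]=Z$, $[e_a,f_a]=-Z$ for $a\ge 1$. Also $[\mathfrak{b},Z]=0$. The mixed brackets are described after complex-bilinear extension, with $E_k:=e_k-if_k$ and $[B,\bar E_k]=\overline{[B,E_k]}$ for $B\in\mathfrak{b}$ real: for $k=0,\dots,n-1$ and $a\in\{2,\dots,n-1\}$, $[B_1^R,E_k]=-\delta_{k0}E_1-\delta_{k1}E_0$, $[B_a^R,E_k]=-\tfrac12(\delta_{k0}+\delta_{k1})E_a-\tfrac12\delta_{ka}(E_0-E_1)$,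 $[B_1^I,E_k]=-i(\delta_{k0}+\delta_{k1})(E_0-E_1)$, $[B_a^I,E_k]=\tfrac{i}{2}(\delta_{k0}+\delta_{k1})E_a-\tfrac{i}{2}\delta_{ka}(E_0-E_1)$. The inner product $g_\rho^c$ on $\mathfrak{l}$ is given by $g(B_1^R,B_1^R)=\frac{\rho+c}{\rho}$, $g(B_1^I,B_1^I)=\frac{(\rho+c)^3}{\rho^2(\rho+2c)}$, $g(B_a^R,B_a^R)=g(B_a^I,B_a^I)=\frac{\rho+c}{4\rho}$ ($a\ge2$), $g(e_0,e_0)=g(f_0,f_0)=\frac{\rho+2c}{4\rho^2}$, $g(e_a,e_a)=g(f_a,f_a)=\frac{1}{4\rho}$ ($a\ge1$), $g(Z,Z)=\frac{\rho+c}{4\rho^2(\rho+2c)}$, $g(B_1^I,Z)=-\frac{c(\rho+c)}{2\rho^2(\rho+2c)}$, and all other pairs of distinct basis vectors orthogonal. This is the left-invariant metric on the group $L$ with Lie algebra $\mathfrak{l}$ corresponding to the metric induced on the level sets (orbits of a cohomogeneity one action) of the one-loop deformation with parameter $c$ of the quaternionic Kähler symmetric space $\mathrm{SU}(n,2)/\mathrm{S}(\mathrm{U}(n)\times\mathrm{U}(2))$. A left-invariant metric on a simply connected solvable Lie group is a solvsoliton if $\mathrm{ric}=\lambda\mathrm{Id}+D$ with $\lambda\in\mathbb{R}$ and $D$ a derivation of the Lie algebra. *)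

From mathcomp Require Import all_boot all_order all_algebra.
Set Implicit Arguments. Unset Strict Implicit. Unset Printing Implicit Defensive.
Import Order.TTheory GRing.Theory Num.Theory.
Local Open Scope ring_scope.

(* The metric Lie algebra (l, g_rho^c) of dimension 4n-1.
   Basis labels:
     inl (inl a)        = B^R_{a+1}   (a : 'I_n.-1, paper index a+1 in 1..n-1)
     inl (inr a)        = B^I_{a+1}
     inr (inl (inl k))  = e_k         (k : 'I_n)
     inr (inl (inr k))  = f_k
     inr (inr tt)       = Z                                                  *)
Definition lidx (n : nat) :=
  (('I_n.-1 + 'I_n.-1) + (('I_n + 'I_n) + unit))%type.

Section LieAlg.
Variable R : realFieldType.
Variable n : nat.

Definition lvec := lidx n -> R.

Definition kd (x y : nat) : R := (x == y)%:R.

Definition evBR (m : nat) : lvec := fun s =>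
  match s with inl (inl a) => kd (val a).+1 m | _ => 0 end.
Definition evBI (m : nat) : lvec := fun s =>
  match s with inl (inr a) => kd (val a).+1 m | _ => 0 end.
Definition evZ : lvec := fun s =>
  match s with inr (inr _) => 1 | _ => 0 end.
Definition ev (t : lidx n) : lvec := fun s => (s == t)%:R.

(* Complex coefficient (real part, imaginary part) of E_j in [B, E_k],
   B = B^R_pa (isI = false) or B^I_pa (isI = true), pa in 1..n-1,
   where E_k = e_k - i f_k. *)
Definition cB (isI : bool) (pa k j : nat) : R * R :=
  if ~~ isI then
    if pa == 1%N then (- (kd k 0 * kd j 1) - kd k 1 * kd j 0, 0)
    else (- (1/2) * (kd k 0 + kd k 1) * kd j pa
          - (1/2) * kd k pa * (kd j 0 - kd j 1), 0)
  else
    if pa == 1%N then (0, - ((kd k 0 + kd k 1) * (kd j 0 - kd j 1)))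
    else (0, (1/2) * (kd k 0 + kd k 1) * kd j pa
             - (1/2) * kd k pa * (kd j 0 - kd j 1)).

(* If [B,E_k] = sum_j (al_j + i be_j) E_j, then (B real)
   [B,e_k] = sum_j (al_j e_j + be_j f_j),  [B,f_k] = sum_j (-be_j e_j + al_j f_j). *)
Definition mixE (isI : bool) (pa k : nat) : lvec := fun s =>
  match s with
  | inr (inl (inl j)) => (cB isI pa k (val j)).1
  | inr (inl (inr j)) => (cB isI pa k (val j)).2
  | _ => 0 end.
Definition mixF (isI : bool) (pa k : nat) : lvec := fun s =>
  match s with
  | inr (inl (inl j)) => - (cB isI pa k (val j)).2
  | inr (inl (inr j)) => (cB isI pa k (val j)).1
  | _ => 0 end.

(* The listed brackets [x_i, x_j] (each unordered pair listed at most once). *)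
Definition lhalf (i j : lidx n) : lvec :=
  match i, j with
  | inl (inl a), inl (inl b) =>
      if ((val a).+1 == 1%N) && ((val b).+1 != 1%N) then evBR (val b).+1
      else fun _ => 0
  | inl (inl a), inl (inr b) =>
      if ((val a).+1 == 1%N) && ((val b).+1 == 1%N) then fun s => 2 * evBI 1 s
      else if ((val a).+1 == 1%N) then evBI (val b).+1
      else if (val b == val a) then fun s => (1/2) * evBI 1 s
      else fun _ => 0
  | inl (inl a), inr (inl (inl k)) => mixE false (val a).+1 (val k)
  | inl (inl a), inr (inl (inr k)) => mixF false (val a).+1 (val k)
  | inl (inr a), inr (inl (inl k)) => mixE true (val a).+1 (val k)
  | inl (inr a), inr (inl (inr k)) => mixF true (val a).+1 (val k)
  | inr (inl (inl k)), inr (inl (inr l)) =>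
      if val k == val l then
        (if val k == 0%N then evZ else fun s => - evZ s)
      else fun _ => 0
  | _, _ => fun _ => 0
  end.

Definition lbrb (i j : lidx n) : lvec := fun s => lhalf i j s - lhalf j i s.

Definition lbr (x y : lvec) : lvec := fun s =>
  \sum_(i : lidx n) \sum_(j : lidx n) x i * y j * lbrb i j s.

Variables rho c : R.

Definition gb (i j : lidx n) : R :=
  match i, j with
  | inl (inl a), inl (inl b) =>
      if val a == val b then
        (if val a == 0%N then (rho + c) / rho else (rho + c) / (4 * rho))
      else 0
  | inl (inr a), inl (inr b) =>
      if val a == val b then
        (if val a == 0%N then (rho + c) ^+ 3 / (rho ^+ 2 * (rho + 2 * c))
         else (rho + c) / (4 * rho))
      else 0
  | inr (inl (inl k)), inr (inl (inl l))
  | inr (inl (inr k)), inr (inl (inr l)) =>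
      if val k == val l then
        (if val k == 0%N then (rho + 2 * c) / (4 * rho ^+ 2) else 1 / (4 * rho))
      else 0
  | inr (inr _), inr (inr _) => (rho + c) / (4 * rho ^+ 2 * (rho + 2 * c))
  | inl (inr a), inr (inr _)
  | inr (inr _), inl (inr a) =>
      if val a == 0%N then - (c * (rho + c)) / (2 * rho ^+ 2 * (rho + 2 * c))
      else 0
  | _, _ => 0
  end.

Definition gm (x y : lvec) : R :=
  \sum_(i : lidx n) \sum_(j : lidx n) x i * y j * gb i j.

(* A left-invariant connection, given by Gam i j = nabla_{x_i} x_j. *)
Definition nab (Gam : lidx n -> lidx n -> lvec) (x y : lvec) : lvec := fun s =>
  \sum_(i : lidx n) \sum_(j : lidx n) x i * y j * Gam i j s.

(* Levi-Civita: torsion free and metric (on left-invariant vector fields). *)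
Definition levi_civita (Gam : lidx n -> lidx n -> lvec) : Prop :=
  (forall x y s, nab Gam x y s - nab Gam y x s = lbr x y s) /\
  (forall x y z, gm (nab Gam x y) z + gm y (nab Gam x z) = 0).

Definition curv Gam (x y z : lvec) : lvec := fun s =>
  nab Gam x (nab Gam y z) s - nab Gam y (nab Gam x z) s - nab Gam (lbr x y) z s.

Definition ricci Gam (y z : lvec) : R :=
  \sum_(i : lidx n) curv Gam (ev i) y z i.

(* linear endomorphisms of l, as matrices D j i (coefficient of x_j in D x_i) *)
Definition lapp (D : lidx n -> lidx n -> R) (x : lvec) : lvec := fun j =>
  \sum_(i : lidx n) D j i * x i.

Definition is_derivation (D : lidx n -> lidx n -> R) : Prop :=
  forall x y s, lapp D (lbr x y) s = lbr (lapp D x) y s + lbr x (lapp D y) s.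

(* Solvsoliton: Ric = lambda Id + D with D a derivation, where the Ricci
   endomorphism Ric is defined by g(Ric X, Y) = ric(X, Y). *)
Definition is_solvsoliton (Gam : lidx n -> lidx n -> lvec) : Prop :=
  exists (lam : R) (D : lidx n -> lidx n -> R),
    is_derivation D /\
    forall x y, ricci Gam x y = gm (fun s => lam * x s + lapp D x s) y.

End LieAlg.

From mathcomp Require Import all_boot all_order all_algebra.
From mathcomp Require Import ring lra zify.
Set Implicit Arguments. Unset Strict Implicit. Unset Printing Implicit Defensive.
Import Order.TTheory GRing.Theory Num.Theory.
Local Open Scope ring_scope.

(* The Levi-Civita connection is given by the Koszul formula, raising indices
   with the explicit inverse of the Gram matrix (diagonal except for a 2x2 block
   on B^I_1, Z).  Since e_0 and e_1 are orthogonal to all other basis vectors,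
   ric = lam Id + D forces ric(e_k,e_k) = (lam + D(e_k,e_k)) g(e_k,e_k) for
   k = 0, 1.  Applying the derivation rule to [B^R_1, e_0] = -e_1 and
   [B^R_1, e_1] = -e_0 gives D(e_1,e_1) = D(B^R_1,B^R_1) + D(e_0,e_0) and the
   symmetric identity, so D(e_0,e_0) = D(e_1,e_1) and ric(e_k,e_k)/g(e_k,e_k)
   would not depend on k.  But a direct computation gives
     ric(e_0,e_0) = (n-1) c/rho^2 - (rho+c)/(2(rho+2c)^2),
     ric(e_1,e_1) = -(rho+3c)/(2 rho (rho+2c)),
   and the two normalised values differ by a positive multiple of c. *)

Section OrdinalSums.
Variable R : realFieldType.

Lemma sum_only2 (I : finType) (F : I -> R) a b : a != b ->
  (forall k, k != a -> k != b -> F k = 0) -> \sum_k F k = F a + F b.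
Proof.
move=> ab Fab; rewrite (bigD1 a) // (bigD1 b) 1?eq_sym //= big1 ?addr0 ?addrA //.
by move=> k /andP[]; apply: Fab.
Qed.

Lemma sum_ord_eq p t (V : R) :
  \sum_(k < p) (if k == t :> nat then V else 0) = if (t < p)%N then V else 0.
Proof.
rewrite -big_mkcond /=; case: ltnP => [tp | pt].
  by rewrite (big_pred1 (Ordinal tp)).
by rewrite big_pred0 // => k; rewrite ltn_eqF // (leq_trans (ltn_ord k) pt).
Qed.

Lemma sum_ord_succ_eq p t (V : R) :
  \sum_(k < p) (if t == k.+1 :> nat then V else 0) = if (0 < t <= p)%N then V else 0.
Proof.
case: t => [|t]; first by rewrite big1_eq.
by under eq_bigr do rewrite eqSS eq_sym; rewrite sum_ord_eq.
Qed.

Lemma sum_ord_pos p (B C : R) :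
  \sum_(k < p.+1) (if (0 < k)%N then B else C) = C + B *+ p.
Proof. by rewrite big_ord_recl /= sumr_const card_ord. Qed.

End OrdinalSums.

Section BasisCalculus.
Variables (R : realFieldType) (n : nat).
Implicit Types (x y : lvec R n) (i j k l t : lidx n).
Implicit Types (Gam : lidx n -> lidx n -> lvec R n) (D : lidx n -> lidx n -> R).

Lemma sum_evl t (F : lidx n -> R) : \sum_i ev R t i * F i = F t.
Proof.
by rewrite (big_only1 t) // /ev ?eqxx ?mul1r // => i /negPf -> _; rewrite mul0r.
Qed.

Lemma sum_evr t (F : lidx n -> R) : \sum_i F i * ev R t i = F t.
Proof. by rewrite -[RHS](sum_evl t); apply: eq_bigr => i _; rewrite mulrC. Qed.

Lemma lbr_evl i y s : lbr (ev R i) y s = \sum_j y j * lbrb R i j s.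
Proof.
rewrite /lbr -(sum_evl i (fun i => \sum_j y j * lbrb R i j s)).
by apply: eq_bigr => i' _; rewrite mulr_sumr; apply: eq_bigr => j _; rewrite mulrA.
Qed.

Lemma lbr_evr x j s : lbr x (ev R j) s = \sum_i x i * lbrb R i j s.
Proof.
apply: eq_bigr => i _; rewrite -(sum_evr j (fun j => x i * lbrb R i j s)).
by apply: eq_bigr => j' _; rewrite mulrAC.
Qed.

Lemma lbr_ev i j s : lbr (ev R i) (ev R j) s = lbrb R i j s.
Proof. by rewrite lbr_evl sum_evl. Qed.

Lemma lbrbN i j s : lbrb R j i s = - lbrb R i j s.
Proof. by rewrite /lbrb opprB. Qed.

Lemma nab_evl Gam i y s : nab Gam (ev R i) y s = \sum_j y j * Gam i j s.
Proof.
rewrite /nab -(sum_evl i (fun i => \sum_j y j * Gam i j s)).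
by apply: eq_bigr => i' _; rewrite mulr_sumr; apply: eq_bigr => j _; rewrite mulrA.
Qed.

Lemma nab_evr Gam x j s : nab Gam x (ev R j) s = \sum_i x i * Gam i j s.
Proof.
apply: eq_bigr => i _; rewrite -(sum_evr j (fun j => x i * Gam i j s)).
by apply: eq_bigr => j' _; rewrite mulrAC.
Qed.

Lemma nab_ev Gam i j s : nab Gam (ev R i) (ev R j) s = Gam i j s.
Proof. by rewrite nab_evl sum_evl. Qed.

Definition ricci_term Gam i j k l : R :=
  Gam i j l * Gam k l k - Gam k j l * Gam i l k - lbrb R k i l * Gam l j k.

Lemma ricci_ev Gam i j :
  ricci Gam (ev R i) (ev R j) = \sum_k \sum_l ricci_term Gam i j k l.
Proof.
rewrite /ricci; apply: eq_bigr => k _; rewrite /curv !nab_evl nab_evr -!sumrB.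
by apply: eq_bigr => l _; rewrite !nab_ev lbr_ev.
Qed.

Lemma derivation_lbrb D : is_derivation D -> forall i j s,
  \sum_t D s t * lbrb R i j t =
  \sum_t D t i * lbrb R t j s + \sum_t D t j * lbrb R i t s.
Proof.
move=> Dder i j s.
have -> : \sum_t D s t * lbrb R i j t = lapp D (lbr (ev R i) (ev R j)) s.
  by apply: eq_bigr => t _; rewrite lbr_ev.
rewrite Dder lbr_evr lbr_evl.
by congr (_ + _); apply: eq_bigr => t _; rewrite /lapp sum_evr.
Qed.

End BasisCalculus.

Lemma gb_sym (R : realFieldType) (n : nat) (rho c : R) (i j : lidx n) :
  gb rho c i j = gb rho c j i.
Proof.
by case: i => [[a|a]|[[a|a]|[]]]; case: j => [[b|b]|[[b|b]|[]]] //=;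
  rewrite 1?[val b == _]eq_sym; case: eqP => // ->.
Qed.

Section LeviCivita.
Variables (R : realFieldType) (n : nat) (rho c : R).
Variable ginv : lidx n -> lidx n -> R.
Hypothesis ginv_sym : forall i j, ginv i j = ginv j i.
Hypothesis ginvK : forall i j, \sum_k ginv i k * gb rho c k j = (i == j)%:R.
Implicit Types (x y z : lvec R n) (i j k t : lidx n).

Definition lower x k : R := gm rho c x (ev R k).
Definition raise (w : lidx n -> R) : lvec R n := fun s => \sum_k ginv s k * w k.

Definition koszul i j k : R :=
  (lower (lbrb R i j) k - lower (lbrb R j k) i + lower (lbrb R k i) j) / 2.

Definition christoffel i j : lvec R n := raise (koszul i j).

Lemma lowerE x k : lower x k = \sum_t x t * gb rho c t k.
Proof.
apply: eq_bigr => t _; rewrite -(sum_evr k (fun j => x t * gb rho c t j)).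
by apply: eq_bigr => j _; rewrite mulrAC.
Qed.

Lemma gmE x y : gm rho c x y = \sum_t y t * lower x t.
Proof.
rewrite /gm exchange_big; apply: eq_bigr => t _; rewrite lowerE mulr_sumr.
by apply: eq_bigr => s _; rewrite mulrCA mulrA.
Qed.

Lemma gmC x y : gm rho c x y = gm rho c y x.
Proof.
rewrite /gm exchange_big; apply: eq_bigr => i _; apply: eq_bigr => j _.
by rewrite gb_sym [x _ * _]mulrC.
Qed.

Lemma lower_eq x y k : (forall s, x s = y s) -> lower x k = lower y k.
Proof. by move=> xy; rewrite !lowerE; apply: eq_bigr => t _; rewrite xy. Qed.

Lemma lower_lbrbN i j k : lower (lbrb R j i) k = - lower (lbrb R i j) k.
Proof.
by rewrite !lowerE -sumrN; apply: eq_bigr => t _; rewrite lbrbN mulNr.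
Qed.

Lemma lower_raise w k : lower (raise w) k = w k.
Proof.
rewrite lowerE -[RHS](sum_evl k w); under eq_bigr do rewrite mulr_suml.
rewrite exchange_big; apply: eq_bigr => l _; rewrite /ev -ginvK mulr_suml.
by apply: eq_bigr => t _; rewrite ginv_sym mulrAC.
Qed.

Lemma raise_lower x s : raise (lower x) s = x s.
Proof.
rewrite -[RHS](sum_evl s x) /raise; under eq_bigr do rewrite lowerE mulr_sumr.
rewrite exchange_big; apply: eq_bigr => t _; rewrite /ev eq_sym -ginvK mulr_suml.
by apply: eq_bigr => k _; rewrite [gb _ _ t k]gb_sym mulrA mulrAC.
Qed.

Lemma lower_nab Gam x y k :
  lower (nab Gam x y) k = \sum_i \sum_j x i * y j * lower (Gam i j) k.
Proof.
rewrite lowerE; under eq_bigr do rewrite mulr_suml.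
rewrite exchange_big; apply: eq_bigr => i _; under eq_bigr do rewrite mulr_suml.
rewrite exchange_big; apply: eq_bigr => j _; rewrite lowerE mulr_sumr.
by apply: eq_bigr => s _; rewrite mulrA.
Qed.

Lemma gm_nab Gam x y z : gm rho c (nab Gam x y) z =
  \sum_i \sum_j \sum_t x i * y j * z t * lower (Gam i j) t.
Proof.
rewrite gmE; under eq_bigr do rewrite lower_nab mulr_sumr.
rewrite exchange_big; apply: eq_bigr => i _; under eq_bigr do rewrite mulr_sumr.
rewrite exchange_big; apply: eq_bigr => j _; apply: eq_bigr => t _.
by rewrite mulrCA !mulrA.
Qed.

Lemma koszulN i j k : koszul i k j = - koszul i j k.
Proof.
by rewrite /koszul (lower_lbrbN k i) (lower_lbrbN j k) (lower_lbrbN i j); field.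
Qed.

Lemma koszul_tor i j k : koszul i j k - koszul j i k = lower (lbrb R i j) k.
Proof.
by rewrite /koszul (lower_lbrbN i j) (lower_lbrbN k j) (lower_lbrbN i k); field.
Qed.

Lemma christoffel_tor i j s :
  christoffel i j s - christoffel j i s = lbrb R i j s.
Proof.
rewrite -[RHS]raise_lower /christoffel /raise -sumrB.
by apply: eq_bigr => k _; rewrite -mulrBr koszul_tor.
Qed.

Lemma levi_civita_christoffel : levi_civita rho c christoffel.
Proof.
split=> [x y s | x y z].
  rewrite /nab /lbr [X in _ - X]exchange_big -sumrB; apply: eq_bigr => i _.
  rewrite -sumrB; apply: eq_bigr => j _.
  by rewrite -christoffel_tor [y j * x i]mulrC mulrBr.
rewrite [gm _ _ y _]gmC !gm_nab -big_split big1 // => i _ /=.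
rewrite [X in _ + X]exchange_big -big_split big1 // => j _ /=.
rewrite -big_split big1 // => t _ /=.
by rewrite /christoffel !lower_raise koszulN; ring.
Qed.

Lemma levi_civita_uniq Gam :
  levi_civita rho c Gam -> forall i j s, Gam i j s = christoffel i j s.
Proof.
case=> tor met.
have lower_tor i j k :
    lower (Gam i j) k - lower (Gam j i) k = lower (lbrb R i j) k.
  rewrite !lowerE -sumrB; apply: eq_bigr => t _.
  by rewrite -mulrBl -(nab_ev Gam i) -(nab_ev Gam j) tor lbr_ev.
have lower_skew i j k : lower (Gam i j) k + lower (Gam i k) j = 0.
  have := met (ev R i) (ev R j) (ev R k).
  by rewrite (gmC (ev R j)) /= !gmE !sum_evl !(lower_eq _ (nab_ev Gam i _)).
move=> i j s; rewrite -raise_lower; apply: eq_bigr => k _; congr (_ * _).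
rewrite /koszul -!lower_tor.
have := lower_skew i j k; have := lower_skew j k i; have := lower_skew k i j.
lra.
Qed.

End LeviCivita.

Definition ord_one {m : nat} : 'I_m.+2 := Ordinal (isT : (1 < m.+2)%N).

Section Positivity.
Variables (R : realFieldType) (rho c : R).
Hypotheses (rho_gt0 : 0 < rho) (c_ge0 : 0 <= c).

Lemma rho_neq0 : rho != 0. Proof. by rewrite gt_eqF. Qed.
Lemma rhoc_neq0 : rho + c != 0. Proof. by rewrite gt_eqF // ltr_wpDr. Qed.
Lemma rho2c_neq0 : rho + 2 * c != 0.
Proof. by rewrite gt_eqF // ltr_wpDr // mulr_ge0. Qed.

End Positivity.

Ltac field_rho := field;
  rewrite ?pnatr_eq0 ?rho2c_neq0 ?rhoc_neq0 ?rho_neq0 //.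

Ltac case_nat_eqs :=
  repeat match goal with
  | |- context [?x == ?y] => lazymatch type of x with nat => idtac end;
      case: (x =P y) => [?|?]; subst; rewrite /= ?eqxx;
      try match goal with H : ?a <> ?a |- _ => by case: H end
  end.

(* The brackets and the metric only distinguish the indices 0, 1 and >= 2. *)
Ltac case_ords := repeat match goal with
  | a : ordinal _ |- _ => destruct a as [[|[|a]] ?]
  end.

Ltac lidx_eqE := rewrite -?sum_eqE /= -?sum_eqE /= -?sum_eqE /= -?val_eqE /=.

Section Metric.
Variables (R : realFieldType) (m : nat) (rho c : R).
Local Notation n := m.+2.
Implicit Types (v : lvec R n) (w : lidx n -> R) (M : lidx n -> lidx n -> R).

Definition bR (a : 'I_m.+1) : lidx n := inl (inl a).
Definition bI (a : 'I_m.+1) : lidx n := inl (inr a).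
Definition be (k : 'I_n) : lidx n := inr (inl (inl k)).
Definition bf (k : 'I_n) : lidx n := inr (inl (inr k)).
Definition bZ : lidx n := inr (inr tt).

Lemma sum_lidx (F : lidx n -> R) : \sum_i F i =
  \sum_a F (bR a) + \sum_a F (bI a) + \sum_k F (be k) + \sum_k F (bf k) + F bZ.
Proof. by rewrite !big_sumType /= (big_only1 tt) ?addrA // => -[]. Qed.

(* Off the diagonal, the metric and its inverse only pair B^I_1 with Z. *)
Definition coupled (t k : lidx n) : bool :=
  match t, k with
  | inl (inr a), inr (inr _) | inr (inr _), inl (inr a) => val a == 0%N
  | _, _ => false
  end.

Definition block_sparse M :=
  forall t k, t != k -> ~~ coupled t k -> M t k = 0.

Definition contract M v (k : lidx n) : R :=
  v k * M k k +
  match k with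
  | inl (inr a) => if val a == 0%N then v bZ * M bZ k else 0
  | inr (inr _) => v (bI ord0) * M (bI ord0) k
  | _ => 0
  end.

Lemma sum_block_sparse M v k : block_sparse M ->
  \sum_t v t * M t k = contract M v k.
Proof.
move=> Msp; rewrite /contract.
have only1 : (forall t, t != k -> ~~ coupled t k) ->
    \sum_t v t * M t k = v k * M k k.
  by move=> kc; rewrite (big_only1 k) // => t tk _; rewrite Msp ?kc ?mulr0.
case: k only1 => [[a|a]|[[a|a]|[]]] only1 /=.
- by rewrite addr0 only1 // => -[[b|b]|[[b|b]|[]]].
- case: eqP => [a0 | /eqP a0]; last first.
    by rewrite addr0 only1 // => -[[b|b]|[[b|b]|[]]].
  have -> : a = ord0 by apply: val_inj.
  rewrite (@sum_only2 _ _ _ (bI ord0) bZ) // => t t0 tZ.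
  by rewrite Msp ?mulr0 //; case: t t0 tZ => [[b|b]|[[b|b]|[]]].
- by rewrite addr0 only1 // => -[[b|b]|[[b|b]|[]]].
- by rewrite addr0 only1 // => -[[b|b]|[[b|b]|[]]].
- rewrite (@sum_only2 _ _ _ bZ (bI ord0)) // => t tZ t0.
  rewrite Msp ?mulr0 //; apply: contra t0.
  by case: t {tZ} => [[b|b]|[[b|b]|[]]].
Qed.

Definition ginv (i j : lidx n) : R :=
  match i, j with
  | inl (inl a), inl (inl b) | inl (inr a), inl (inr b) =>
      if val a == val b then
        (if val a == 0%N then rho / (rho + c) else 4 * rho / (rho + c))
      else 0
  | inr (inl (inl k)), inr (inl (inl l))
  | inr (inl (inr k)), inr (inl (inr l)) =>
      if val k == val l then
        (if val k == 0%N then 4 * rho ^+ 2 / (rho + 2 * c) else 4 * rho)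
      else 0
  | inr (inr _), inr (inr _) => 4 * rho * (rho + c)
  | inl (inr a), inr (inr _) | inr (inr _), inl (inr a) =>
      if val a == 0%N then 2 * rho * c / (rho + c) else 0
  | _, _ => 0
  end.

Lemma ginv_sym (i j : lidx n) : ginv i j = ginv j i.
Proof.
by case: i => [[a|a]|[[a|a]|[]]]; case: j => [[b|b]|[[b|b]|[]]] //=;
  rewrite 1?[val b == _]eq_sym; case: eqP => // ->.
Qed.

Lemma gb_block_sparse : block_sparse (@gb R n rho c).
Proof.
move=> t k; case: t => [[a|a]|[[a|a]|[]]]; case: k => [[b|b]|[[b|b]|[]]] //= ? ?;
  by rewrite ifN.
Qed.

Lemma ginv_block_sparse : block_sparse ginv.
Proof.
move=> t k; case: t => [[a|a]|[[a|a]|[]]]; case: k => [[b|b]|[[b|b]|[]]] //= ? ?;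
  by rewrite ifN.
Qed.

Lemma lower_contract v k : lower rho c v k = contract (@gb R n rho c) v k.
Proof. by rewrite lowerE (sum_block_sparse _ _ gb_block_sparse). Qed.

Lemma raise_contract w s : raise ginv w s = contract ginv w s.
Proof.
rewrite /raise -(sum_block_sparse _ _ ginv_block_sparse).
by apply: eq_bigr => k _; rewrite ginv_sym mulrC.
Qed.

Hypotheses (rho_gt0 : 0 < rho) (c_ge0 : 0 <= c).

Lemma ginvK i j : \sum_k ginv i k * gb rho c k j = (i == j)%:R.
Proof.
rewrite (sum_block_sparse (ginv i) _ gb_block_sparse).
case: i => [[[a ?]|[a ?]]|[[[a ?]|[a ?]]|[]]];
  case: j => [[[b ?]|[b ?]]|[[[b ?]|[b ?]]|[]]];
  rewrite /contract; lidx_eqE; case_nat_eqs; field_rho.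
Qed.

End Metric.

Ltac crunch := cbv beta iota delta [ev contract ginv gb lbrb lhalf mixE mixF cB
  evBR evBI evZ kd bZ bI bR be bf ord_one]; simpl; lidx_eqE; case_nat_eqs; field_rho.

Section RicciCurvature.
Variables (R : realFieldType) (m : nat) (rho c : R).
Hypotheses (rho_gt0 : 0 < rho) (c_ge0 : 0 <= c).
Local Notation n := m.+2.
Local Notation Chr := (christoffel rho c (@ginv R m rho c)).

Lemma christoffelE i j s : Chr i j s =
  contract (ginv rho c) (fun k => (contract (gb rho c) (lbrb R i j) k
    - contract (gb rho c) (lbrb R j k) i + contract (gb rho c) (lbrb R k i) j) / 2) s.
Proof. by rewrite /christoffel raise_contract /contract /koszul !lower_contract. Qed.

Definition ricci_e0_table (i j : lidx n) : R :=
  match i, j with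
  | inl (inl a), inr (inl (inl k)) | inl (inr a), inr (inl (inr k))
  | inr (inl (inl k)), inl (inl a) | inr (inl (inr k)), inl (inr a) =>
      if val k == (val a).+1 then
        (if i is inl _ then c - rho else rho + c) / (4 * rho ^+ 2)
      else 0
  | inr (inl (inr k)), inr (inr _) =>
      if val k == 0%N then - (3 * (rho + c)) / (4 * (rho + 2 * c) ^+ 2) else 0
  | inr (inr _), inr (inl (inr k)) =>
      if val k == 0%N then (rho + c) / (4 * (rho + 2 * c) ^+ 2) else 0
  | _, _ => 0
  end.

Definition ricci_e1_table (i j : lidx n) : R :=
  match i, j with
  | inl (inl a), inr (inl (inl k)) | inl (inr a), inr (inl (inr k))
  | inr (inl (inl k)), inl (inl a) | inr (inl (inr k)), inl (inr a) =>
      if (val a == 0%N) && (val k == 0%N) then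
        (if i is inl _ then - (rho + 3 * c) else rho + c) / (4 * rho * (rho + 2 * c))
      else 0
  | inr (inl (inr k)), inr (inr _) =>
      if val k == 1%N then - (3 * (rho + c)) / (4 * rho * (rho + 2 * c)) else 0
  | inr (inr _), inr (inl (inr k)) =>
      if val k == 1%N then (rho + c) / (4 * rho * (rho + 2 * c)) else 0
  | _, _ => 0
  end.

Lemma ricci_term_e0 i j :
  ricci_term Chr (be ord0) (be ord0) i j = ricci_e0_table i j.
Proof.
case: i => [[a|a]|[[a|a]|[]]]; case: j => [[b|b]|[[b|b]|[]]]; case_ords;
  rewrite /ricci_term !christoffelE /ricci_e0_table; crunch.
Qed.

Lemma ricci_term_e1 i j :
  ricci_term Chr (be ord_one) (be ord_one) i j = ricci_e1_table i j.
Proof.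
case: i => [[a|a]|[[a|a]|[]]]; case: j => [[b|b]|[[b|b]|[]]]; case_ords;
  rewrite /ricci_term !christoffelE /ricci_e1_table; crunch.
Qed.

Lemma sum_ricci_e0_row i : \sum_j ricci_e0_table i j =
  match i with
  | inl _ => (c - rho) / (4 * rho ^+ 2)
  | inr (inl (inl k)) => if (0 < k)%N then (rho + c) / (4 * rho ^+ 2) else 0
  | inr (inl (inr k)) => if (0 < k)%N then (rho + c) / (4 * rho ^+ 2)
                         else - (3 * (rho + c)) / (4 * (rho + 2 * c) ^+ 2)
  | inr (inr _) => (rho + c) / (4 * (rho + 2 * c) ^+ 2)
  end.
Proof.
case: i => [[a|a]|[[k|k]|[]]];
  rewrite sum_lidx /= ?big1_eq ?sum_ord_eq ?sum_ord_succ_eq ?add0r ?addr0 //.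
- by rewrite ltnS ltn_ord.
- by rewrite ltnS ltn_ord.
- by rewrite -[(k <= m.+1)%N]ltnS ltn_ord andbT.
by rewrite -[(k <= m.+1)%N]ltnS ltn_ord andbT lt0n; case: eqP; rewrite ?addr0 ?add0r.
Qed.

Lemma sum_ricci_e0_table : \sum_i \sum_j ricci_e0_table i j =
  (m.+1)%:R * c / rho ^+ 2 - (rho + c) / (2 * (rho + 2 * c) ^+ 2).
Proof.
rewrite (eq_bigr _ (fun i _ => sum_ricci_e0_row i)) sum_lidx /=.
by rewrite !sumr_const !card_ord !sum_ord_pos; field_rho.
Qed.

Lemma sum_ricci_e1_row i : \sum_j ricci_e1_table i j =
  match i with
  | inl (inl a) | inl (inr a) =>
      if val a == 0%N then - (rho + 3 * c) / (4 * rho * (rho + 2 * c)) else 0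
  | inr (inl (inl k)) =>
      if val k == 0%N then (rho + c) / (4 * rho * (rho + 2 * c)) else 0
  | inr (inl (inr k)) =>
      (if val k == 0%N then (rho + c) / (4 * rho * (rho + 2 * c)) else 0) +
      (if val k == 1%N then - (3 * (rho + c)) / (4 * rho * (rho + 2 * c)) else 0)
  | inr (inr _) => (rho + c) / (4 * rho * (rho + 2 * c))
  end.
Proof.
case: i => [[a|a]|[[k|k]|[]]]; rewrite sum_lidx /= ?big1_eq ?add0r ?addr0;
  last by rewrite sum_ord_eq.
all: case: eqP => _; under eq_bigr do rewrite ?andbT ?andbF;
  by rewrite /= ?sum_ord_eq ?big1_eq ?add0r.
Qed.

Lemma sum_ricci_e1_table : \sum_i \sum_j ricci_e1_table i j =
  - (rho + 3 * c) / (2 * rho * (rho + 2 * c)).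
Proof.
rewrite (eq_bigr _ (fun i _ => sum_ricci_e1_row i)) sum_lidx /=.
by rewrite big_split /= !sum_ord_eq /=; field_rho.
Qed.

Lemma ricci_be0 Gam : levi_civita rho c Gam ->
  ricci Gam (ev R (@be m ord0)) (ev R (be ord0)) =
  (m.+1)%:R * c / rho ^+ 2 - (rho + c) / (2 * (rho + 2 * c) ^+ 2).
Proof.
move=> lc; rewrite ricci_ev -sum_ricci_e0_table; apply: eq_bigr => i _.
apply: eq_bigr => j _; rewrite -ricci_term_e0 /ricci_term.
by rewrite !(levi_civita_uniq (ginvK rho_gt0 c_ge0) lc).
Qed.

Lemma ricci_be1 Gam : levi_civita rho c Gam ->
  ricci Gam (ev R (@be m ord_one)) (ev R (be ord_one)) =
  - (rho + 3 * c) / (2 * rho * (rho + 2 * c)).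
Proof.
move=> lc; rewrite ricci_ev -sum_ricci_e1_table; apply: eq_bigr => i _.
apply: eq_bigr => j _; rewrite -ricci_term_e1 /ricci_term.
by rewrite !(levi_civita_uniq (ginvK rho_gt0 c_ge0) lc).
Qed.

End RicciCurvature.

Section DerivationDiagonal.
Variables (R : realFieldType) (m : nat).
Local Notation n := m.+2.
Implicit Types (k l : 'I_n) (i s : lidx n) (D : lidx n -> lidx n -> R).

Ltac brackets := case_ords; move=> /eqP /= ?; try lia; crunch.

Lemma lbrb_bR0_be k l s : (k + l == 1)%N ->
  lbrb R (bR ord0) (be k) s = - ev R (be l) s.
Proof. by case: s => [[a|a]|[[a|a]|[]]]; brackets. Qed.

Lemma lbrb_be_be k l i : (k + l == 1)%N ->
  lbrb R i (be k) (be l) = - ev R (bR ord0) i.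
Proof. by case: i => [[a|a]|[[a|a]|[]]]; brackets. Qed.

Lemma lbrb_bR0_e k l i : (k + l == 1)%N ->
  lbrb R (bR ord0) i (be l) = - ev R (be k) i.
Proof. by case: i => [[a|a]|[[a|a]|[]]]; brackets. Qed.

Lemma derivation_be_diag D k l : is_derivation D -> (k + l == 1)%N ->
  D (be l) (be l) = D (bR ord0) (bR ord0) + D (be k) (be k).
Proof.
move=> Dder kl; have := derivation_lbrb Dder (bR ord0) (be k) (be l).
under eq_bigr do rewrite (lbrb_bR0_be _ kl) mulrN.
under [X in _ = X + _]eq_bigr do rewrite (lbrb_be_be _ kl) mulrN.
under [X in _ = _ + X]eq_bigr do rewrite (lbrb_bR0_e _ kl) mulrN.
rewrite !sumrN !sum_evr; lra.
Qed.

Lemma derivation_be0_be1 D : is_derivation D ->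
  D (be ord0) (be ord0) = D (be ord_one) (be ord_one).
Proof.
move=> Dder.
have := derivation_be_diag (k := ord0) (l := ord_one) Dder isT.
have := derivation_be_diag (k := ord_one) (l := ord0) Dder isT.
lra.
Qed.

End DerivationDiagonal.

Section NoSoliton.
Variables (R : realFieldType) (m : nat) (rho c : R).
Hypotheses (rho_gt0 : 0 < rho) (c_gt0 : 0 < c).
Local Notation n := m.+2.

Lemma soliton_ricci_be (Gam : lidx n -> lidx n -> lvec R n) lam D k :
  (forall x y, ricci Gam x y = gm rho c (fun s => lam * x s + lapp D x s) y) ->
  ricci Gam (ev R (be k)) (ev R (be k)) =
  (lam + D (be k) (be k)) * gb rho c (be k) (be k).
Proof.
move=> ricE; rewrite ricE -/(lower _ _ _ _) lower_contract /contract /= addr0.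
by rewrite /lapp sum_evr /ev eqxx mulr1.
Qed.

Lemma ricci_be_ratio_neq :
  ((m.+1)%:R * c / rho ^+ 2 - (rho + c) / (2 * (rho + 2 * c) ^+ 2)) *
    gb rho c (@be m ord_one) (be ord_one)
  != - (rho + 3 * c) / (2 * rho * (rho + 2 * c)) * gb rho c (@be m ord0) (be ord0).
Proof.
have c_ge0 := ltW c_gt0.
have rho2c_gt0 : 0 < rho + 2 * c by rewrite addr_gt0 ?mulr_gt0.
rewrite -subr_eq0 /=.
have -> : ((m.+1)%:R * c / rho ^+ 2 - (rho + c) / (2 * (rho + 2 * c) ^+ 2))
    * (1 / (4 * rho))
    - - (rho + 3 * c) / (2 * rho * (rho + 2 * c)) * ((rho + 2 * c) / (4 * rho ^+ 2))
  = (2 * (m.+1)%:R * c * (rho + 2 * c) ^+ 2 + 6 * rho ^+ 2 * c + 16 * rho * c ^+ 2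
     + 12 * c ^+ 3) / (8 * rho ^+ 3 * (rho + 2 * c) ^+ 2).
  by field_rho.
rewrite gt_eqF // divr_gt0 ?mulr_gt0 ?exprn_gt0 // -!addrA ltr_wpDl //.
  by rewrite !mulr_ge0 ?ler0n ?exprn_ge0 ?ltW.
by rewrite !addr_gt0 ?mulr_gt0 ?exprn_gt0.
Qed.

Lemma not_solvsoliton (Gam : lidx n -> lidx n -> lvec R n) :
  levi_civita rho c Gam -> ~ is_solvsoliton rho c Gam.
Proof.
move=> lc [lam [D [Dder ricE]]].
have := soliton_ricci_be ord0 ricE; have := soliton_ricci_be ord_one ricE.
rewrite (ricci_be0 rho_gt0 (ltW c_gt0) lc) (ricci_be1 rho_gt0 (ltW c_gt0) lc).
rewrite -(derivation_be0_be1 Dder) => r1 r0.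
by move/eqP: ricci_be_ratio_neq; apply; rewrite r0 r1 mulrAC.
Qed.

End NoSoliton.

Theorem theorem4p13 (R : realFieldType) (n : nat) (rho c : R) :
  (1 < n)%N -> 0 < rho -> 0 < c ->
  (exists Gam : lidx n -> lidx n -> lvec R n, levi_civita rho c Gam) /\
  (forall Gam : lidx n -> lidx n -> lvec R n,
     levi_civita rho c Gam -> ~ is_solvsoliton rho c Gam).
Proof.
case: n => [|[|m]] // _ rho_gt0 c_gt0; split.
  exists (christoffel rho c (@ginv R m rho c)).
  exact: levi_civita_christoffel (ginv_sym rho c) (ginvK rho_gt0 (ltW c_gt0)).
by move=> Gam; apply: not_solvsoliton.
Qed.
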